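(* Let $\flat\in\{>,<\}$. For $\imath\in\{1,\dots,2n-1\}$, the set $\{r\in\mathbb Z\mid(\imath,\frac r2)\in\widehat I^{\mathrm{tw},\flat}_\xi\}$ is a $4$-segment if $\imath\ne n$ and a $2$-segment if $\imath=n$. (For $k\in\mathbb Z_{>0}$, a $k$-segment is a set $\{\ell+sk\mid s=0,\dots,N\}$ with $\ell\in\mathbb Z$, $N\in\mathbb Z_{\ge0}$.) Moreover, the following hold in $\Upsilon_{[\mathcal Q^\flat]}$, whose vertices are labelled by $\overline I^{\mathrm{tw},\flat}_\xi$. - (1) Let $i\le n-2$ and suppose $(i,r-2),(i,r+2)\in\overline I^{\mathrm{tw},\flat}_\xi$. Then $(i-1,r),(i+1,r)\in\overline I^{\mathrm{tw},\flat}_\xi$ (ignoring $(0,r)$ when $i=1$). There are arrows from $(i,r-2)$ to these vertices and from them to $(i,r+2)$, and these are all the arrows exiting $(i,r-2)$, respectively entering $(i,r+2)$. - (2) Suppose $(n-1,r-2),(n-1,r+2)\in\overline I^{\mathrm{tw},\flat}_\xi$. Then $(n-2,r),(n,r-1),(n,r+1)\in\overline I^{\mathrm{tw},\flat}_\xi$ (ignoring $(0,r)$ when $n=2$). There are arrows from $(n-1,r-2)$ to $(n-2,r)$ and $(n,r-1)$, and arrows from $(n-2,r)$ and $(n,r+1)$ to $(n-1,r+2)$. These are all the arrows exiting $(n-1,r-2)$, respectively entering $(n-1,r+2)$. - (3) Suppose $(n,r-1),(n,r+1)\in\overline I^{\mathrm{tw},\flat}_\xi$. Then $(n-1,r)\in\overline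 I^{\mathrm{tw},\flat}_\xi$. There are arrows from $(n,r-1)$ to $(n-1,r)$ and from $(n-1,r)$ to $(n,r+1)$, and these are all the arrows exiting $(n,r-1)$, respectively entering $(n,r+1)$.
   Context: Fix $n\ge2$. Let $\mathcal Q$ be a quiver with underlying graph the Dynkin diagram of type $\mathrm A_{2n-2}$ (vertices $1,\dots,2n-2$, edges $\{i,i+1\}$), and $\xi$ a height function: $\xi(j)=\xi(i)+1$ for each arrow $i\to j$. Let $\widehat I_\xi=\{(i,p):1\le i\le 2n-2,\ p\equiv\xi(i)\ \mathrm{mod}\ 2,\ \xi(2n-1-i)-(2n-1)<p\le\xi(i)\}$. This is the vertex set of the Auslander–Reiten quiver $\Gamma_{\mathcal Q}$, whose arrows are $(j,p-1)\to(i,p)$ for all $|i-j|=1$ with both endpoints in $\widehat I_\xi$. Let $\phi(i,p)=(i,p)$ for $i\le n-1$ and $\phi(i,p)=(i+1,p)$ for $i\ge n$. The twisted Auslander–Reiten quiver $\Upsilon_{[\mathcal Q^\flat]}$ ($\flat\in\{>,<\}$) has vertex set $\widehat I^{\mathrm{tw},\flat}_\xi$ consisting of: - $\phi(\widehat I_\xi)$; - a vertex $(n,p-\frac12)$ for each arrow $(j,p-1)\to(i,p)$ of $\Gamma_{\mathcal Q}$ with $\{i,j\}=\{n-1,n\}$; - one extra vertex: $(n,r_M+\frac12)$ if $\flat={>}$, or $(n,r_m-\frac12)$ if $\flat={<}$, where $r_M$, $r_m$ are the max and min of $\{p:(n-1,p)\text{ or }(n,p)\in\widehat I_\xi\}$.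 Its arrows are: - $\phi(j,p-1)\to\phi(i,p)$ for each arrow of $\Gamma_{\mathcal Q}$ with $\{i,j\}\ne\{n-1,n\}$; - $\phi(j,p-1)\to(n,p-\frac12)\to\phi(i,p)$ for each arrow $(j,p-1)\to(i,p)$ of $\Gamma_{\mathcal Q}$ with $\{i,j\}=\{n-1,n\}$; - if $\flat={>}$, the arrow $v_M\to(n,r_M+\frac12)$, where $v_M$ is the unique vertex of $\phi(\widehat I_\xi)$ with first coordinate in $\{n-1,n+1\}$ and second coordinate $r_M$; - if $\flat={<}$, the arrow $(n,r_m-\frac12)\to v_m$, where $v_m$ is the unique vertex of $\phi(\widehat I_\xi)$ with first coordinate in $\{n-1,n+1\}$ and second coordinate $r_m$. Vertices are relabelled by the injective map $(\imath,s)\mapsto(\imath,2s)$ if $\imath\le n$ and $(\imath,s)\mapsto(2n-\imath,2s)$ if $\imath>n$. The image is $\overline I^{\mathrm{tw},\flat}_\xi\subset\{1,\dots,n\}\times\mathbb Z$. *)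

From Stdlib Require Import ZArith Lia.
Open Scope Z_scope.

Inductive flat := Gt | Lt.

(* Quiver Q on A_{2n-2}: Q i = true means the arrow i -> i+1, false means i+1 -> i
   (for 1 <= i <= 2n-3).  xi is a height function for Q. *)
Definition is_height (n : Z) (Q : Z -> bool) (xi : Z -> Z) : Prop :=
  forall i, 1 <= i <= 2*n-3 ->
    if Q i then xi (i+1) = xi i + 1 else xi i = xi (i+1) + 1.

Definition Ihat (n : Z) (xi : Z -> Z) (i p : Z) : Prop :=
  1 <= i <= 2*n-2 /\ Z.even p = Z.even (xi i) /\
  xi (2*n-1-i) - (2*n-1) < p /\ p <= xi i.

Definition GammaArr (n : Z) (xi : Z -> Z) (j i p : Z) : Prop :=
  Ihat n xi j (p-1) /\ Ihat n xi i p /\ (i = j + 1 \/ j = i + 1).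

Definition special_pair (n i j : Z) : Prop :=
  (i = n-1 /\ j = n) \/ (i = n /\ j = n-1).

Definition phi1 (n i : Z) : Z := if i <=? n-1 then i else i+1.

Definition midP (n : Z) (xi : Z -> Z) (p : Z) : Prop :=
  Ihat n xi (n-1) p \/ Ihat n xi n p.
Definition is_rM n xi p := midP n xi p /\ forall q, midP n xi q -> q <= p.
Definition is_rm n xi p := midP n xi p /\ forall q, midP n xi q -> p <= q.

(* Vertices of Upsilon in DOUBLED coordinates: (k, r) stands for (k, r/2). *)
Definition Itw (n : Z) (xi : Z -> Z) (f : flat) (v : Z * Z) : Prop :=
  (exists i p, Ihat n xi i p /\ v = (phi1 n i, 2*p))
  \/ (exists j i p, GammaArr n xi j i p /\ special_pair n i j /\ v = (n, 2*p-1))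
  \/ (f = Gt /\ exists p, is_rM n xi p /\ v = (n, 2*p+1))
  \/ (f = Lt /\ exists p, is_rm n xi p /\ v = (n, 2*p-1)).

Definition UpsArr (n : Z) (xi : Z -> Z) (f : flat) (a b : Z * Z) : Prop :=
  (exists j i p, GammaArr n xi j i p /\ ~ special_pair n i j /\
     a = (phi1 n j, 2*(p-1)) /\ b = (phi1 n i, 2*p))
  \/ (exists j i p, GammaArr n xi j i p /\ special_pair n i j /\
     ((a = (phi1 n j, 2*(p-1)) /\ b = (n, 2*p-1)) \/
      (a = (n, 2*p-1) /\ b = (phi1 n i, 2*p))))
  \/ (f = Gt /\ exists i p, is_rM n xi p /\ (i = n-1 \/ i = n) /\ Ihat n xi i p /\
        a = (phi1 n i, 2*p) /\ b = (n, 2*p+1))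
  \/ (f = Lt /\ exists i p, is_rm n xi p /\ (i = n-1 \/ i = n) /\ Ihat n xi i p /\
        a = (n, 2*p-1) /\ b = (phi1 n i, 2*p)).

Definition relab (n : Z) (v : Z * Z) : Z * Z :=
  if fst v <=? n then v else (2*n - fst v, snd v).

Definition Ibar n xi f (v : Z * Z) : Prop :=
  exists u, Itw n xi f u /\ relab n u = v.
Definition Arr n xi f (v w : Z * Z) : Prop :=
  exists u u', Itw n xi f u /\ Itw n xi f u' /\ relab n u = v /\ relab n u' = w /\
               UpsArr n xi f u u'.

Definition is_segment (k : Z) (S : Z -> Prop) : Prop :=
  exists l N, 0 <= N /\ forall r, S r <-> exists s, 0 <= s <= N /\ r = l + s*k.

From Stdlib Require Import ZArith Lia.
Open Scope Z_scope.

(* Adjacent heights differ by one, so |xi i - xi j| <= |i - j| and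
   xi i = xi j + i - j (mod 2).  Hence each row of Gamma_Q is a progression of
   step 2, and the rows i and 2n-1-i that the relabelling folds together have
   opposite parity, so vertices (i, p), (i, p+2) of a folded row come from one
   row of Gamma_Q; the Lipschitz bound then puts both neighbours (i +- 1, p+1)
   into Gamma_Q, which is the mesh of (1) and (2).  The middle rows n-1, n
   jointly fill [r_M - 2n + 2, r_M], so the vertices inserted on row n, with
   the extra one above (>) or below (<), form an unbroken 2-segment linked to
   row n-1 in both directions, giving (3).  Every arrow of Upsilon joins
   adjacent folded rows below n, or the rows n-1 and n, whence the claims that
   these are all the arrows. *)

Ltac zlia := Z.to_euclidean_division_equations; lia.

Definition unit_steps (n : Z) (xi : Z -> Z) : Prop :=
  forall i, 1 <= i < 2*n-2 -> Z.abs (xi (i+1) - xi i) = 1.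

Lemma is_height_unit_steps n Q xi : is_height n Q xi -> unit_steps n xi.
Proof. intros H i Hi. specialize (H i ltac:(lia)). destruct (Q i); lia. Qed.

Lemma unit_steps_dist (a b : Z) (h : Z -> Z) :
  (forall i, a <= i < b -> Z.abs (h (i+1) - h i) = 1) ->
  forall x y, a <= x <= b -> a <= y <= b ->
  Z.abs (h y - h x) <= Z.abs (y - x) /\ (h y - h x) mod 2 = (y - x) mod 2.
Proof.
  intros Hstep.
  assert (Hfwd : forall d, 0 <= d -> forall x, a <= x -> x + d <= b ->
            Z.abs (h (x + d) - h x) <= d /\ (h (x + d) - h x) mod 2 = d mod 2).
  { intros d Hd. pattern d. apply natlike_ind; [| |exact Hd].
    - intros x _ _. rewrite Z.add_0_r, Z.sub_diag. split; [lia | reflexivity].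
    - intros e He IH x Hx Hxd.
      destruct (IH x Hx ltac:(lia)) as [Hle Hpar].
      pose proof (Hstep (x + e) ltac:(lia)) as Hs.
      replace (x + Z.succ e) with (x + e + 1) by lia. split; zlia. }
  intros x y Hx Hy. destruct (Z.le_ge_cases x y).
  - destruct (Hfwd (y - x) ltac:(lia) x ltac:(lia) ltac:(lia)) as [Hle Hpar].
    replace (x + (y - x)) with y in * by lia. split; zlia.
  - destruct (Hfwd (x - y) ltac:(lia) y ltac:(lia) ltac:(lia)) as [Hle Hpar].
    replace (y + (x - y)) with x in * by lia. split; zlia.
Qed.

Lemma is_segment_ext k (S T : Z -> Prop) :
  (forall r, S r <-> T r) -> is_segment k T -> is_segment k S.
Proof.
  intros E (l & N & HN & HT). exists l, N. split; [exact HN|].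
  intros r. rewrite E. apply HT.
Qed.

Definition fold_row (n i : Z) : Z := if i <=? n-1 then i else 2*n-1-i.

Lemma fold_row_spec n i :
  (i <= n-1 /\ fold_row n i = i) \/ (n <= i /\ fold_row n i = 2*n-1-i).
Proof. unfold fold_row. destruct (Z.leb_spec i (n-1)); [left | right]; lia. Qed.

Lemma fold_row_range n i : 1 <= i <= 2*n-2 -> 1 <= fold_row n i <= n-1.
Proof. destruct (fold_row_spec n i); lia. Qed.

Lemma fold_row_middle n i : i = n-1 \/ i = n -> fold_row n i = n-1.
Proof. destruct (fold_row_spec n i); lia. Qed.

Lemma fold_row_eq_middle n i : fold_row n i = n-1 -> i = n-1 \/ i = n.
Proof. destruct (fold_row_spec n i); lia. Qed.

Lemma fold_row_eq n i j : fold_row n i = fold_row n j -> i = j \/ j = 2*n-1-i.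
Proof. destruct (fold_row_spec n i), (fold_row_spec n j); lia. Qed.

Lemma fold_row_adjacent n i j : (i = j+1 \/ j = i+1) -> ~ special_pair n i j ->
  fold_row n i = fold_row n j + 1 \/ fold_row n j = fold_row n i + 1.
Proof. unfold special_pair. destruct (fold_row_spec n i), (fold_row_spec n j); lia. Qed.

Lemma fold_row_lift n i k : 1 <= i <= 2*n-2 -> 1 <= k <= n-1 ->
  (k = fold_row n i - 1 \/ k = fold_row n i + 1) ->
  exists j, fold_row n j = k /\ (j = i-1 \/ j = i+1) /\ 1 <= j <= 2*n-2 /\
            ~ special_pair n i j /\ ~ special_pair n j i.
Proof.
  unfold special_pair. intros Hi Hk Hki.
  destruct (fold_row_spec n i) as [[Hle E]|[Hge E]]; rewrite E in Hki.
  - exists k. destruct (fold_row_spec n k); lia.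
  - exists (2*n-1-k). destruct (fold_row_spec n (2*n-1-k)); lia.
Qed.

Lemma phi1_ne_n n i : phi1 n i <> n.
Proof. unfold phi1. destruct (Z.leb_spec i (n-1)); lia. Qed.

Lemma phi1_inj n i j : phi1 n i = phi1 n j -> i = j.
Proof. unfold phi1. destruct (Z.leb_spec i (n-1)), (Z.leb_spec j (n-1)); lia. Qed.

Lemma relab_phi1 n i s : relab n (phi1 n i, s) = (fold_row n i, s).
Proof.
  unfold relab, phi1, fold_row; destruct (Z.leb_spec i (n-1)); cbn [fst snd];
    [destruct (Z.leb_spec i n) | destruct (Z.leb_spec (i+1) n)]; f_equal; lia.
Qed.

Lemma relab_middle n s : relab n (n, s) = (n, s).
Proof. unfold relab; cbn [fst snd]. now rewrite Z.leb_refl. Qed.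

Lemma relab_eq_middle n u s : relab n u = (n, s) -> u = (n, s).
Proof.
  destruct u as [a b]. unfold relab; cbn [fst snd].
  destruct (Z.leb_spec a n); intros E; [exact E|].
  apply (f_equal fst) in E; cbn [fst] in E. lia.
Qed.

Lemma Arr_shape n xi f a s b t : Arr n xi f (a, s) (b, t) ->
  (1 <= a <= n-1 /\ 1 <= b <= n-1 /\ (b = a-1 \/ b = a+1) /\ t = s+2)
  \/ (a = n-1 /\ b = n /\ t = s+1)
  \/ (a = n /\ b = n-1 /\ t = s+1).
Proof.
  intros (u & u' & _ & _ & Hu & Hu' & HA).
  destruct HA as [(j & i & p & (Hj & Hi & Hji) & Hns & -> & ->)
    |[(j & i & p & _ & Hs & [[-> ->]|[-> ->]])
    |[(_ & i & p & _ & Hmid & _ & -> & ->)|(_ & i & p & _ & Hmid & _ & -> & ->)]]];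
    rewrite ?relab_phi1, ?relab_middle in Hu; rewrite ?relab_phi1, ?relab_middle in Hu';
    apply pair_equal_spec in Hu as [<- <-]; apply pair_equal_spec in Hu' as [<- <-].
  - left. pose proof (fold_row_range n j (proj1 Hj)).
    pose proof (fold_row_range n i (proj1 Hi)).
    pose proof (fold_row_adjacent n i j Hji Hns). lia.
  - right; left. rewrite fold_row_middle by (unfold special_pair in Hs; lia). lia.
  - right; right. rewrite fold_row_middle by (unfold special_pair in Hs; lia). lia.
  - right; left. rewrite fold_row_middle by exact Hmid. lia.
  - right; right. rewrite fold_row_middle by exact Hmid. lia.
Qed.

Definition flat_shift (f : flat) : Z := match f with Gt => 1 | Lt => 0 end.

Section TwistedQuiver.

Variables (n : Z) (xi : Z -> Z).
Hypothesis n_ge2 : 2 <= n.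
Hypothesis xi_steps : unit_steps n xi.

Lemma xi_dist x y : 1 <= x <= 2*n-2 -> 1 <= y <= 2*n-2 ->
  Z.abs (xi y - xi x) <= Z.abs (y - x) /\ (xi y - xi x) mod 2 = (y - x) mod 2.
Proof. apply unit_steps_dist. exact xi_steps. Qed.

Lemma Ihat_iff i p : Ihat n xi i p <->
  1 <= i <= 2*n-2 /\ p mod 2 = xi i mod 2 /\ xi (2*n-1-i) - (2*n-1) < p <= xi i.
Proof.
  unfold Ihat. rewrite !Zmod_even.
  destruct (Z.even p), (Z.even (xi i)); intuition congruence.
Qed.

Lemma Ihat_row_segment i : 1 <= i <= 2*n-2 ->
  is_segment 4 (fun r => exists p, Ihat n xi i p /\ r = 2*p).
Proof.
  intros Hi. destruct (xi_dist i (2*n-1-i) Hi ltac:(lia)) as [Hd Hpar].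
  (* the least p above the lower bound with the parity of xi i *)
  set (lo := xi (2*n-1-i) - (2*n-1) + 2).
  exists (2*lo), ((xi i - lo) / 2). split; [zlia|]. intros r. split.
  - intros (p & Hp & ->). rewrite Ihat_iff in Hp. exists ((p - lo) / 2). split; zlia.
  - intros (s & Hs & ->). exists (lo + 2*s). rewrite Ihat_iff.
    split; [|lia]. split; [lia|]. zlia.
Qed.

Lemma Ihat_diamond i k p : (k = i-1 \/ k = i+1) -> 1 <= k <= 2*n-2 ->
  Ihat n xi i p -> Ihat n xi i (p+2) -> Ihat n xi k (p+1).
Proof.
  intros Hki Hk H0 H2. rewrite Ihat_iff in *.
  destruct H0 as (Hi & P0 & L0 & U0), H2 as (_ & _ & L2 & U2).
  pose proof (xi_dist i k Hi Hk).
  pose proof (xi_dist (2*n-1-i) (2*n-1-k) ltac:(lia) ltac:(lia)).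
  split; [lia|]. split; zlia.
Qed.

Lemma Ihat_fold_row_inj i j p q : Ihat n xi i p -> Ihat n xi j q ->
  fold_row n i = fold_row n j -> p mod 2 = q mod 2 -> i = j.
Proof.
  intros Hi Hj Hf Hpq. destruct (fold_row_eq n i j Hf) as [Hij | ->]; [exact Hij | exfalso].
  rewrite Ihat_iff in Hi, Hj.
  destruct (xi_dist i (2*n-1-i)) as [_ Hpar]; [lia | lia | zlia].
Qed.

Let rM := Z.max (xi (n-1)) (xi n).

Lemma xi_middle_step : Z.abs (xi n - xi (n-1)) = 1.
Proof.
  pose proof (xi_steps (n-1) ltac:(lia)) as H. now replace (n-1+1) with n in H by lia.
Qed.

Lemma midP_iff q : midP n xi q <-> rM - 2*n + 2 <= q <= rM.
Proof.
  pose proof xi_middle_step. unfold midP, rM. rewrite !Ihat_iff.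
  replace (2*n-1-(n-1)) with n by lia. replace (2*n-1-n) with (n-1) by lia.
  split; intros; zlia.
Qed.

Lemma is_rM_iff p : is_rM n xi p <-> p = rM.
Proof.
  unfold is_rM. setoid_rewrite midP_iff. split.
  - intros [Hp Hmax]. specialize (Hmax rM). lia.
  - intros ->. split; [lia|]. intros q Hq. lia.
Qed.

Lemma is_rm_iff p : is_rm n xi p <-> p = rM - 2*n + 2.
Proof.
  unfold is_rm. setoid_rewrite midP_iff. split.
  - intros [Hp Hmin]. specialize (Hmin (rM - 2*n + 2)). lia.
  - intros ->. split; [lia|]. intros q Hq. lia.
Qed.

Lemma special_arrow_exists p : rM - 2*n + 3 <= p <= rM ->
  exists j i, GammaArr n xi j i p /\ special_pair n i j.
Proof.
  intros Hp. pose proof xi_middle_step. unfold GammaArr, special_pair, rM in *.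
  destruct (Z.eq_dec (p mod 2) (xi n mod 2)); [exists (n-1), n | exists n, (n-1)];
    rewrite !Ihat_iff; replace (2*n-1-(n-1)) with n by lia;
    replace (2*n-1-n) with (n-1) by lia; split; [zlia | lia | zlia | lia].
Qed.

Lemma special_arrow_range j i p : GammaArr n xi j i p -> special_pair n i j ->
  rM - 2*n + 3 <= p <= rM.
Proof.
  intros (Hj & Hi & _) Hs.
  assert (midP n xi (p-1) /\ midP n xi p) as [H1 H2]
    by (unfold midP, special_pair in *; destruct Hs as [[-> ->]|[-> ->]]; auto).
  rewrite midP_iff in H1, H2. lia.
Qed.

Lemma Itw_phi1_iff f i r :
  Itw n xi f (phi1 n i, r) <-> exists p, Ihat n xi i p /\ r = 2*p.
Proof.
  split.
  - intros [(j & p & Hj & E)|[(_ & _ & p & _ & _ & E)|[(_ & p & _ & E)|(_ & p & _ & E)]]];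
      apply pair_equal_spec in E as [E1 E2];
      [apply phi1_inj in E1; subst; eauto | exfalso; exact (phi1_ne_n n i E1) ..].
  - intros (p & Hp & ->). left. eauto.
Qed.

Lemma Itw_middle_iff f s : Itw n xi f (n, s) <->
  exists p, s = 2*p-1 /\ rM - 2*n + 2 + flat_shift f <= p <= rM + flat_shift f.
Proof.
  split.
  - intros [(i & p & _ & E)|[(j & i & p & G & S & E)|[(-> & p & Hp & E)|(-> & p & Hp & E)]]];
      apply pair_equal_spec in E as [E1 E2].
    + exfalso. exact (phi1_ne_n n i (eq_sym E1)).
    + pose proof (special_arrow_range j i p G S). exists p. destruct f; cbn [flat_shift]; lia.
    + apply is_rM_iff in Hp. exists (p+1). cbn [flat_shift]. lia.
    + apply is_rm_iff in Hp. exists p. cbn [flat_shift]. lia.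
  - intros (p & -> & Hp).
    destruct (Z.eq_dec p (rM + 1)) as [Htop|Hntop];
      [|destruct (Z.eq_dec p (rM - 2*n + 2)) as [Hbot|Hnbot]].
    + destruct f; cbn [flat_shift] in Hp; [|lia].
      right; right; left. split; [reflexivity|]. exists rM.
      rewrite is_rM_iff. split; [reflexivity | f_equal; lia].
    + destruct f; cbn [flat_shift] in Hp; [lia|].
      right; right; right. split; [reflexivity|]. exists p. rewrite is_rm_iff. auto.
    + destruct (special_arrow_exists p) as (j & i & G & S);
        [destruct f; cbn [flat_shift] in Hp; lia|].
      right; left. exists j, i, p. auto.
Qed.

Lemma Ibar_middle_iff f s : Ibar n xi f (n, s) <-> Itw n xi f (n, s).
Proof.
  split.
  - intros (u & Hu & E). apply relab_eq_middle in E. subst. exact Hu.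
  - intros H. exists (n, s). split; [exact H | apply relab_middle].
Qed.

Lemma Ibar_row_iff f k s : k <= n-1 ->
  Ibar n xi f (k, s) <-> exists i p, Ihat n xi i p /\ fold_row n i = k /\ s = 2*p.
Proof.
  intros Hk. split.
  - intros (u & Hu & E).
    destruct Hu as [(i & p & Hp & ->)
      |[(_ & _ & p & _ & _ & ->)|[(_ & p & _ & ->)|(_ & p & _ & ->)]]];
      rewrite ?relab_phi1, ?relab_middle in E; apply pair_equal_spec in E as [E1 E2];
      [eauto | lia | lia | lia].
  - intros (i & p & Hp & <- & ->). exists (phi1 n i, 2*p).
    split; [left; eauto | apply relab_phi1].
Qed.

Lemma Ibar_next_to_middle_iff f s :
  Ibar n xi f (n-1, s) <-> exists p, s = 2*p /\ rM - 2*n + 2 <= p <= rM.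
Proof.
  rewrite Ibar_row_iff by lia. split.
  - intros (i & p & Hp & Hi & ->). exists p. split; [reflexivity|]. apply midP_iff.
    destruct (fold_row_eq_middle n i Hi) as [-> | ->]; [left | right]; exact Hp.
  - intros (p & -> & Hp). apply midP_iff in Hp as [Hp|Hp]; [exists (n-1) | exists n];
      exists p; rewrite fold_row_middle by lia; auto.
Qed.

Lemma Arr_Gamma f j i p q s t : Ihat n xi j p -> Ihat n xi i q -> q = p+1 ->
  (i = j+1 \/ j = i+1) -> ~ special_pair n i j -> s = 2*p -> t = 2*q ->
  Arr n xi f (fold_row n j, s) (fold_row n i, t).
Proof.
  intros Hj Hi -> Hji Hns -> ->.
  assert (G : GammaArr n xi j i (p+1)) by (unfold GammaArr; rewrite Z.add_simpl_r; auto).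
  exists (phi1 n j, 2*(p+1-1)), (phi1 n i, 2*(p+1)).
  split; [|split; [|split; [|split]]].
  - left. exists j, (p+1-1). rewrite Z.add_simpl_r. auto.
  - left. eauto.
  - rewrite relab_phi1. f_equal. lia.
  - apply relab_phi1.
  - left. exists j, i, (p+1). auto.
Qed.

Lemma Arr_into_special f j i p s t : GammaArr n xi j i p -> special_pair n i j ->
  s = 2*(p-1) -> t = 2*p-1 -> Arr n xi f (n-1, s) (n, t).
Proof.
  intros G S -> ->. pose proof G as (Hj & _).
  exists (phi1 n j, 2*(p-1)), (n, 2*p-1).
  split; [|split; [|split; [|split]]].
  - left. eauto.
  - right; left. exists j, i, p. auto.
  - rewrite relab_phi1, fold_row_middle; [reflexivity | unfold special_pair in S; lia].
  - apply relab_middle.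
  - right; left. exists j, i, p. auto.
Qed.

Lemma Arr_out_of_special f j i p s t : GammaArr n xi j i p -> special_pair n i j ->
  s = 2*p-1 -> t = 2*p -> Arr n xi f (n, s) (n-1, t).
Proof.
  intros G S -> ->. pose proof G as (_ & Hi & _).
  exists (n, 2*p-1), (phi1 n i, 2*p).
  split; [|split; [|split; [|split]]].
  - right; left. exists j, i, p. auto.
  - left. eauto.
  - apply relab_middle.
  - rewrite relab_phi1, fold_row_middle; [reflexivity | unfold special_pair in S; lia].
  - right; left. exists j, i, p. auto.
Qed.

Lemma midP_Ihat p : midP n xi p -> exists i, (i = n-1 \/ i = n) /\ Ihat n xi i p.
Proof. intros [H|H]; eauto. Qed.

Lemma Arr_into_top f : f = Gt -> Arr n xi f (n-1, 2*rM) (n, 2*rM+1).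
Proof.
  intros ->.
  destruct (midP_Ihat rM) as (i & Hi & Hp); [apply midP_iff; lia|].
  assert (HM : is_rM n xi rM) by (apply is_rM_iff; reflexivity).
  exists (phi1 n i, 2*rM), (n, 2*rM+1).
  split; [|split; [|split; [|split]]].
  - left. eauto.
  - right; right; left. split; [reflexivity|]. eauto.
  - rewrite relab_phi1, fold_row_middle by exact Hi. reflexivity.
  - apply relab_middle.
  - right; right; left. split; [reflexivity|]. exists i, rM. auto.
Qed.

Lemma Arr_out_of_bottom f : f = Lt ->
  Arr n xi f (n, 2*(rM-2*n+2)-1) (n-1, 2*(rM-2*n+2)).
Proof.
  intros ->.
  destruct (midP_Ihat (rM-2*n+2)) as (i & Hi & Hp); [apply midP_iff; lia|].
  assert (Hm : is_rm n xi (rM-2*n+2)) by (apply is_rm_iff; reflexivity).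
  exists (n, 2*(rM-2*n+2)-1), (phi1 n i, 2*(rM-2*n+2)).
  split; [|split; [|split; [|split]]].
  - right; right; right. split; [reflexivity|]. eauto.
  - left. eauto.
  - apply relab_middle.
  - rewrite relab_phi1, fold_row_middle by exact Hi. reflexivity.
  - right; right; right. split; [reflexivity|]. exists i, (rM-2*n+2). auto.
Qed.

Lemma Arr_into_middle f s : Ibar n xi f (n-1, s) -> Ibar n xi f (n, s+1) ->
  Arr n xi f (n-1, s) (n, s+1).
Proof.
  rewrite Ibar_next_to_middle_iff, Ibar_middle_iff, Itw_middle_iff.
  intros (p & -> & Hp) (q & Hq & Hq').
  destruct (Z.eq_dec p rM) as [->|Hne].
  - apply Arr_into_top. destruct f; cbn [flat_shift] in Hq'; [reflexivity | lia].
  - destruct (special_arrow_exists (p+1)) as (j & i & G & S); [lia|].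
    apply (Arr_into_special f j i (p+1)); auto; lia.
Qed.

Lemma Arr_out_of_middle f s : Ibar n xi f (n, s-1) -> Ibar n xi f (n-1, s) ->
  Arr n xi f (n, s-1) (n-1, s).
Proof.
  rewrite Ibar_next_to_middle_iff, Ibar_middle_iff, Itw_middle_iff.
  intros (q & Hq & Hq') (p & -> & Hp).
  destruct (Z.eq_dec p (rM-2*n+2)) as [->|Hne].
  - apply Arr_out_of_bottom. destruct f; cbn [flat_shift] in Hq'; [lia | reflexivity].
  - destruct (special_arrow_exists p) as (j & i & G & S); [lia|].
    apply (Arr_out_of_special f j i p); auto; lia.
Qed.

Lemma folded_diamond f i k r : i <= n-1 -> (k = i-1 \/ k = i+1) -> 1 <= k <= n-1 ->
  Ibar n xi f (i, r-2) -> Ibar n xi f (i, r+2) ->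
  Ibar n xi f (k, r) /\ Arr n xi f (i, r-2) (k, r) /\ Arr n xi f (k, r) (i, r+2).
Proof.
  intros Hi Hki Hk H1 H2.
  apply Ibar_row_iff in H1 as (i0 & p & Hp & <- & Ep); [|lia].
  apply Ibar_row_iff in H2 as (i1 & q & Hq & Hi1 & Eq); [|lia].
  assert (i1 = i0) as -> by (apply (Ihat_fold_row_inj i1 i0 q p); auto; zlia).
  destruct (fold_row_lift n i0 k (proj1 Hp) Hk Hki) as (k0 & <- & Hk0 & Hk0r & Hns & Hns').
  assert (Hd : Ihat n xi k0 (p+1))
    by (apply (Ihat_diamond i0); auto; replace (p+2) with q by lia; exact Hq).
  split; [|split].
  - apply Ibar_row_iff; [lia|]. exists k0, (p+1). auto with zarith.
  - apply (Arr_Gamma f i0 k0 p (p+1)); auto; lia.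
  - apply (Arr_Gamma f k0 i0 (p+1) q); auto; lia.
Qed.

Lemma mesh_row f i r : i <= n-2 ->
  Ibar n xi f (i, r-2) -> Ibar n xi f (i, r+2) ->
  (forall k, (k = i-1 \/ k = i+1) -> 1 <= k ->
     Ibar n xi f (k, r) /\ Arr n xi f (i, r-2) (k, r) /\ Arr n xi f (k, r) (i, r+2))
  /\ (forall w, Arr n xi f (i, r-2) w ->
        exists k, (k = i-1 \/ k = i+1) /\ 1 <= k /\ w = (k, r))
  /\ (forall w, Arr n xi f w (i, r+2) ->
        exists k, (k = i-1 \/ k = i+1) /\ 1 <= k /\ w = (k, r)).
Proof.
  intros Hi H1 H2. split; [|split].
  - intros k Hki Hk. apply folded_diamond; auto; lia.
  - intros [b t] HA.
    destruct (Arr_shape n xi f _ _ _ _ HA)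
      as [(_ & Hb & Hbi & Ht)|[(Ha & _)|(Ha & _)]]; [|lia|lia].
    exists b. split; [lia|]. split; [lia | f_equal; lia].
  - intros [b t] HA.
    destruct (Arr_shape n xi f _ _ _ _ HA)
      as [(Hb & _ & Hbi & Ht)|[(_ & Ha & _)|(_ & Ha & _)]]; [|lia|lia].
    exists b. split; [lia|]. split; [lia | f_equal; lia].
Qed.

Lemma mesh_next_to_middle f r :
  Ibar n xi f (n-1, r-2) -> Ibar n xi f (n-1, r+2) ->
  (1 <= n-2 -> Ibar n xi f (n-2, r)) /\ Ibar n xi f (n, r-1) /\ Ibar n xi f (n, r+1)
  /\ (1 <= n-2 -> Arr n xi f (n-1, r-2) (n-2, r)) /\ Arr n xi f (n-1, r-2) (n, r-1)
  /\ (1 <= n-2 -> Arr n xi f (n-2, r) (n-1, r+2)) /\ Arr n xi f (n, r+1) (n-1, r+2)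
  /\ (forall w, Arr n xi f (n-1, r-2) w ->
        w = (n, r-1) \/ (1 <= n-2 /\ w = (n-2, r)))
  /\ (forall w, Arr n xi f w (n-1, r+2) ->
        w = (n, r+1) \/ (1 <= n-2 /\ w = (n-2, r))).
Proof.
  intros H1 H2.
  assert (Hdiamond : 1 <= n-2 -> Ibar n xi f (n-2, r) /\
            Arr n xi f (n-1, r-2) (n-2, r) /\ Arr n xi f (n-2, r) (n-1, r+2))
    by (intros; apply folded_diamond; auto; lia).
  assert (Hmid : Ibar n xi f (n, r-1) /\ Ibar n xi f (n, r+1)).
  { pose proof H1 as H1'; pose proof H2 as H2'.
    rewrite Ibar_next_to_middle_iff in H1', H2'.
    destruct H1' as (p & Ep & Hp), H2' as (q & Eq & Hq).
    rewrite !Ibar_middle_iff, !Itw_middle_iff.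
    split; [exists (p+1) | exists (p+2)]; destruct f; cbn [flat_shift]; lia. }
  destruct Hmid as [Hlo Hhi].
  split; [apply Hdiamond|]. split; [exact Hlo|]. split; [exact Hhi|].
  split; [apply Hdiamond|]. split.
  { replace (r-1) with (r-2+1) by lia. apply Arr_into_middle; [exact H1|].
    now replace (r-2+1) with (r-1) by lia. }
  split; [apply Hdiamond|]. split.
  { replace (r+1) with (r+2-1) by lia. apply Arr_out_of_middle; [|exact H2].
    now replace (r+2-1) with (r+1) by lia. }
  split.
  - intros [b t] HA.
    destruct (Arr_shape n xi f _ _ _ _ HA) as [(_ & Hb & Hbi & Ht)|[(_ & Hb & Ht)|(Ha & _)]];
      [right; split; [lia | f_equal; lia] | left; f_equal; lia | lia].
  - intros [b t] HA.
    destruct (Arr_shape n xi f _ _ _ _ HA) as [(Hb & _ & Hbi & Ht)|[(_ & Ha & _)|(Hb & _ & Ht)]];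
      [right; split; [lia | f_equal; lia] | lia | left; f_equal; lia].
Qed.

Lemma mesh_middle f r :
  Ibar n xi f (n, r-1) -> Ibar n xi f (n, r+1) ->
  Ibar n xi f (n-1, r) /\ Arr n xi f (n, r-1) (n-1, r) /\ Arr n xi f (n-1, r) (n, r+1)
  /\ (forall w, Arr n xi f (n, r-1) w -> w = (n-1, r))
  /\ (forall w, Arr n xi f w (n, r+1) -> w = (n-1, r)).
Proof.
  intros H1 H2.
  assert (Hrow : Ibar n xi f (n-1, r)).
  { rewrite Ibar_next_to_middle_iff.
    rewrite Ibar_middle_iff, Itw_middle_iff in H1, H2.
    destruct H1 as (p & Ep & Hp), H2 as (q & Eq & Hq).
    exists p. destruct f; cbn [flat_shift] in *; lia. }
  split; [exact Hrow|]. split; [|split; [|split]].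
  - apply Arr_out_of_middle; assumption.
  - apply Arr_into_middle; assumption.
  - intros [b t] HA.
    destruct (Arr_shape n xi f _ _ _ _ HA) as [(Ha & _)|[(Ha & _)|(_ & Hb & Ht)]];
      [lia | lia | f_equal; lia].
  - intros [b t] HA.
    destruct (Arr_shape n xi f _ _ _ _ HA) as [(_ & Hb & _)|[(Ha & _ & Ht)|(_ & Hb & _)]];
      [lia | f_equal; lia | lia].
Qed.

Lemma Itw_row_segment f k : 1 <= k <= 2*n-1 -> k <> n ->
  is_segment 4 (fun r => Itw n xi f (k, r)).
Proof.
  intros Hk Hkn.
  assert (Hi : exists i, phi1 n i = k /\ 1 <= i <= 2*n-2).
  { destruct (Z.le_gt_cases k (n-1)); [exists k | exists (k-1)];
      unfold phi1; [destruct (Z.leb_spec k (n-1)) | destruct (Z.leb_spec (k-1) (n-1))];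
      split; lia. }
  destruct Hi as (i & <- & Hi).
  apply (is_segment_ext _ _ _ (Itw_phi1_iff f i)). apply Ihat_row_segment. exact Hi.
Qed.

Lemma Itw_middle_segment f : is_segment 2 (fun r => Itw n xi f (n, r)).
Proof.
  exists (2*(rM-2*n+2+flat_shift f)-1), (2*n-2). split; [lia|]. intros r.
  rewrite Itw_middle_iff. split.
  - intros (p & -> & Hp). exists (p - (rM-2*n+2+flat_shift f)). lia.
  - intros (s & Hs & ->). exists (rM-2*n+2+flat_shift f + s). lia.
Qed.

End TwistedQuiver.

Theorem lemma3p22 (n : Z) (Q : Z -> bool) (xi : Z -> Z) (f : flat) :
  2 <= n -> is_height n Q xi ->
  (forall k, 1 <= k <= 2*n-1 ->
     (k <> n -> is_segment 4 (fun r => Itw n xi f (k, r))) /\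
     (k = n -> is_segment 2 (fun r => Itw n xi f (k, r))))
  /\
  (* (1) *)
  (forall i r, i <= n-2 -> Ibar n xi f (i, r-2) -> Ibar n xi f (i, r+2) ->
     (forall k, (k = i-1 \/ k = i+1) -> 1 <= k ->
        Ibar n xi f (k, r) /\ Arr n xi f (i, r-2) (k, r) /\ Arr n xi f (k, r) (i, r+2))
     /\ (forall w, Arr n xi f (i, r-2) w ->
           exists k, (k = i-1 \/ k = i+1) /\ 1 <= k /\ w = (k, r))
     /\ (forall w, Arr n xi f w (i, r+2) ->
           exists k, (k = i-1 \/ k = i+1) /\ 1 <= k /\ w = (k, r)))
  /\
  (* (2) *)
  (forall r, Ibar n xi f (n-1, r-2) -> Ibar n xi f (n-1, r+2) ->
     (1 <= n-2 -> Ibar n xi f (n-2, r)) /\ Ibar n xi f (n, r-1) /\ Ibar n xi f (n, r+1)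
     /\ (1 <= n-2 -> Arr n xi f (n-1, r-2) (n-2, r)) /\ Arr n xi f (n-1, r-2) (n, r-1)
     /\ (1 <= n-2 -> Arr n xi f (n-2, r) (n-1, r+2)) /\ Arr n xi f (n, r+1) (n-1, r+2)
     /\ (forall w, Arr n xi f (n-1, r-2) w ->
           w = (n, r-1) \/ (1 <= n-2 /\ w = (n-2, r)))
     /\ (forall w, Arr n xi f w (n-1, r+2) ->
           w = (n, r+1) \/ (1 <= n-2 /\ w = (n-2, r))))
  /\
  (* (3) *)
  (forall r, Ibar n xi f (n, r-1) -> Ibar n xi f (n, r+1) ->
     Ibar n xi f (n-1, r) /\ Arr n xi f (n, r-1) (n-1, r) /\ Arr n xi f (n-1, r) (n, r+1)
     /\ (forall w, Arr n xi f (n, r-1) w -> w = (n-1, r))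
     /\ (forall w, Arr n xi f w (n, r+1) -> w = (n-1, r))).
Proof.
  intros Hn Hheight. pose proof (is_height_unit_steps n Q xi Hheight) as Hsteps.
  split; [|split; [|split]].
  - intros k Hk. split.
    + intros Hkn. apply Itw_row_segment; assumption.
    + intros ->. apply Itw_middle_segment; assumption.
  - intros i r. apply mesh_row; assumption.
  - intros r. apply mesh_next_to_middle; assumption.
  - intros r. apply mesh_middle; assumption.
Qed.
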